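(* Assume $a_1+a_2=1$. Then $$\Pi^2_0(z)=-\frac{n}{2}\,F(z)\,\log\!\Big(q\,\frac{1-a_0z}{z}\Big)=-\frac n2\Big(F(z)\log(1-a_0z)+\tilde G(z)\Big),$$ where $z=z_1$ and $q=z\exp(\tilde G(z)/F(z))$ is $q_1=e^{\Pi^1/\Pi^0}$ restricted to $z_2=0$.
   Context: Let $\theta_i=z_i\,\partial/\partial z_i$. Fix an integer $n\ge1$ and constants $a_0\neq0,a_1,a_2$. Consider the system $L_1=-n\theta_1\theta_2+\theta_1^2-a_0z_1(\theta_1+a_1)(\theta_1+a_2)$, $L_2=\theta_2^{n}-(-1)^n z_2\,(n\theta_2-\theta_1)(n\theta_2-\theta_1+1)\cdots(n\theta_2-\theta_1+n-1)$. Let $\Pi^0$ be the solution holomorphic at $0$ with $\Pi^0(0)=1$ and, for $a=1,2$, $\Pi^a=\Pi^0\log z_a+\sum_{i\ge0}\Pi^a_i(z_1)z_2^i$ solutions, normalized (by adding multiples of $\Pi^0$) so that $\Pi^a_0(0)=0$. Let $F(z)={}_2F_1(a_1,a_2;1;a_0z)$ and $\tilde G(z)=\sum_{k\ge1}\frac{(a_1)_k(a_2)_k}{(k!)^2}\Big[\sum_{j=1}^2\sum_{l=0}^{k-1}\big(\tfrac1{a_j+l}-\tfrac1{1+l}\big)\Big](a_0z)^k$. *)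

From HB Require Import structures.
From mathcomp Require Import all_boot all_order all_algebra.
Set Implicit Arguments. Unset Strict Implicit. Unset Printing Implicit Defensive.
Import Order.TTheory GRing.Theory Num.Theory.
Local Open Scope ring_scope.

Section GKZ.
Variable R : fieldType.

(* formal power series in z1, z2 : coefficient of z1^k z2^m *)
Definition ser := nat -> nat -> R.
Definition ser0 : ser := fun _ _ => 0.

(* log-series  lc + l1 * log z1 + l2 * log z2  with lc, l1, l2 formal power series *)
Record lser := mkLS { lc : ser; l1 : ser; l2 : ser }.

Definition sadd (s t : ser) : ser := fun k m => s k m + t k m.
Definition sscale (c : R) (s : ser) : ser := fun k m => c * s k m.
Definition th1s (s : ser) : ser := fun k m => k%:R * s k m.
Definition th2s (s : ser) : ser := fun k m => m%:R * s k m.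
Definition z1s (s : ser) : ser := fun k m => if k is k'.+1 then s k' m else 0.
Definition z2s (s : ser) : ser := fun k m => if m is m'.+1 then s k m' else 0.

Definition lsadd (f g : lser) : lser :=
  mkLS (sadd (lc f) (lc g)) (sadd (l1 f) (l1 g)) (sadd (l2 f) (l2 g)).
Definition lsscale (c : R) (f : lser) : lser :=
  mkLS (sscale c (lc f)) (sscale c (l1 f)) (sscale c (l2 f)).

(* theta_i = z_i d/dz_i, using theta_i (log z_i) = 1, theta_i (log z_j) = 0 (j <> i) *)
Definition theta1 (f : lser) : lser :=
  mkLS (sadd (th1s (lc f)) (l1 f)) (th1s (l1 f)) (th1s (l2 f)).
Definition theta2 (f : lser) : lser :=
  mkLS (sadd (th2s (lc f)) (l2 f)) (th2s (l1 f)) (th2s (l2 f)).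
Definition z1mul (f : lser) : lser := mkLS (z1s (lc f)) (z1s (l1 f)) (z1s (l2 f)).
Definition z2mul (f : lser) : lser := mkLS (z2s (lc f)) (z2s (l1 f)) (z2s (l2 f)).

Definition op := lser -> lser.
Definition oadd (A B : op) : op := fun f => lsadd (A f) (B f).
Definition ocomp (A B : op) : op := fun f => A (B f).
Definition oscale (c : R) (A : op) : op := fun f => lsscale c (A f).
Definition oconst (c : R) : op := fun f => lsscale c f.
Definition oid : op := fun f => f.

Definition L1 (n : nat) (a0 a1 a2 : R) : op :=
  oadd (oadd (oscale (- n%:R) (ocomp theta1 theta2)) (ocomp theta1 theta1))
       (oscale (- a0) (ocomp z1mul (ocomp (oadd theta1 (oconst a1))
                                          (oadd theta1 (oconst a2))))).

Definition L2fac (n j : nat) : op :=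
  oadd (oadd (oscale n%:R theta2) (oscale (-1) theta1)) (oconst j%:R).
Definition L2 (n : nat) : op :=
  oadd (iter n (ocomp theta2) oid)
       (oscale (- (-1) ^+ n)
          (ocomp z2mul (foldr (fun j acc => ocomp (L2fac n j) acc) oid (iota 0 n)))).

Definition lsnull (f : lser) : Prop :=
  forall k m, lc f k m = 0 /\ l1 f k m = 0 /\ l2 f k m = 0.

Definition is_sol (n : nat) (a0 a1 a2 : R) (f : lser) : Prop :=
  lsnull (L1 n a0 a1 a2 f) /\ lsnull (L2 n f).

Definition poch (a : R) (k : nat) : R := \prod_(l < k) (a + l%:R).

(* coefficient of z^k in F(z) = 2F1(a1,a2;1;a0 z) *)
Definition Fcoef (a0 a1 a2 : R) (k : nat) : R :=
  poch a1 k * poch a2 k / (k`!%:R ^+ 2) * a0 ^+ k.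

(* coefficient of z^k in log(1 - a0 z) = - sum_{k>=1} (a0 z)^k / k *)
Definition logcoef (a0 : R) (k : nat) : R :=
  if k is 0 then 0 else - (a0 ^+ k / k%:R).

(* coefficient of z^k in F(z) log(1 - a0 z) *)
Definition Flogcoef (a0 a1 a2 : R) (k : nat) : R :=
  \sum_(i < k.+1) Fcoef a0 a1 a2 i * logcoef a0 (k - i).

(* coefficient of z^k in tilde G(z) (zero for k = 0) *)
Definition Gtcoef (a0 a1 a2 : R) (k : nat) : R :=
  poch a1 k * poch a2 k / (k`!%:R ^+ 2)
  * (\sum_(a <- [:: a1; a2]) \sum_(l < k) ((a + l%:R)^-1 - (1 + l%:R)^-1))
  * a0 ^+ k.

End GKZ.

From HB Require Import structures.
From mathcomp Require Import all_boot all_order all_algebra.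
From mathcomp Require Import ring.
Import Order.TTheory GRing.Theory Num.Theory.
Local Open Scope ring_scope.

(* On z2 = 0 the operator L1 reduces to the hypergeometric operator
   theta^2 - a0 z (theta + a1)(theta + a2), and the log z2 part of Pi^2
   contributes the inhomogeneous term n theta Pi^0.  Hence the coefficients
   of Pi^0 and Pi^2_0 obey first-order recurrences with leading factor
   (k+1)^2, which determine them from their constant terms: Pi^0 = F, and it
   suffices to check that -(n/2)(F log(1 - a0 z) + G~) solves the
   inhomogeneous recurrence and vanishes at 0.  For F log(1 - a0 z) this is a
   telescoping of the convolution, using (k+1)^2 = (k+1-i)(k+1+i) + i^2 and,
   when a1 + a2 = 1, (i+a1)(i+a2) - (k+a1)(k+a2) = -(k-i)(k+i+1); for G~ it
   uses (k+a1)(k+a2) (1/(k+a1) + 1/(k+a2)) = 2k+1. *)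

Definition hyp_ratio {R : pzRingType} (a0 a1 a2 : R) (k : nat) : R :=
  a0 * (k%:R + a1) * (k%:R + a2).

Lemma recurrence_unique {R : numFieldType} {c d u v : nat -> R} :
  (forall k, k.+1%:R ^+ 2 * u k.+1 = c k * u k + d k) ->
  (forall k, k.+1%:R ^+ 2 * v k.+1 = c k * v k + d k) ->
  u 0%N = v 0%N -> forall k, u k = v k.
Proof.
move=> recu recv uv0; elim=> // k IHk.
apply: (@mulfI _ (k.+1%:R ^+ 2)); first by rewrite expf_neq0 // pnatr_eq0.
by rewrite recu recv IHk.
Qed.

Lemma L1_lc_z2_0 (R : fieldType) n (a0 a1 a2 : R) (s g : ser R) k :
  lc (L1 n a0 a1 a2 (mkLS s (ser0 R) g)) k.+1 0%N =
  k.+1%:R ^+ 2 * s k.+1 0%N - n%:R * k.+1%:R * g k.+1 0%N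
  - hyp_ratio a0 a1 a2 k * s k 0%N.
Proof.
rewrite /L1 /oadd /oscale /ocomp /oconst /lsscale /lsadd /= /sadd /sscale
  /th1s /th2s /z1s /ser0 /hyp_ratio /=.
ring.
Qed.

Lemma is_sol_rec {R : fieldType} {n} {a0 a1 a2 : R} {s g : ser R} :
  is_sol n a0 a1 a2 (mkLS s (ser0 R) g) -> forall k,
  k.+1%:R ^+ 2 * s k.+1 0%N =
  hyp_ratio a0 a1 a2 k * s k 0%N + n%:R * k.+1%:R * g k.+1 0%N.
Proof.
move=> [solL1 _] k; apply/eqP; rewrite -subr_eq0 -(solL1 k.+1 0%N).1.
by rewrite L1_lc_z2_0; apply/eqP; ring.
Qed.

Section Coefficients.
Variables (R : numFieldType) (a0 a1 a2 : R).

Lemma Fcoef0 : Fcoef a0 a1 a2 0 = 1.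
Proof. by rewrite /Fcoef /poch !big_ord0 fact0 expr1n invr1 !mulr1. Qed.

Lemma Fcoef_rec k :
  k.+1%:R ^+ 2 * Fcoef a0 a1 a2 k.+1 = hyp_ratio a0 a1 a2 k * Fcoef a0 a1 a2 k.
Proof.
rewrite /Fcoef /poch /hyp_ratio !big_ord_recr /= factS natrM [a0 ^+ k.+1]exprS.
have fact_neq0 : k`!%:R != 0 :> R by rewrite pnatr_eq0 -lt0n fact_gt0.
by field; rewrite fact_neq0 nat1r pnatr_eq0.
Qed.

Definition logconv (F : nat -> R) (k : nat) : R :=
  \sum_(i < k) F i * (a0 ^+ (k - i) / (k - i)%:R).

Lemma Flogcoef_logconv k :
  Flogcoef a0 a1 a2 k = - logconv (Fcoef a0 a1 a2) k.
Proof.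
rewrite /Flogcoef /logconv big_ord_recr /= subnn mulr0 addr0 -sumrN.
apply: eq_bigr => i _; have := ltn_ord i; rewrite -subn_gt0.
by case: (k - i)%N => //= m _; rewrite mulrN.
Qed.

Hypothesis a12 : a1 + a2 = 1.

Let a2E : a2 = 1 - a1. Proof. by rewrite -a12 addrC addKr. Qed.

Lemma logconv_rec (F : nat -> R) k :
  (forall j, j.+1%:R ^+ 2 * F j.+1 = hyp_ratio a0 a1 a2 j * F j) ->
  k.+1%:R ^+ 2 * logconv F k.+1 - hyp_ratio a0 a1 a2 k * logconv F k
  = a0 * (k.+1 + k)%:R * F k.
Proof.
move=> Frec.
have split_sq i : (i <= k)%N ->
    k.+1%:R ^+ 2 * (F i * (a0 ^+ (k.+1 - i) / (k.+1 - i)%:R)) =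
    F i * a0 ^+ (k.+1 - i) * (k.+1 + i)%:R
    + i%:R ^+ 2 * F i * (a0 ^+ (k.+1 - i) / (k.+1 - i)%:R).
  move=> le_ik; have : (k.+1 - i)%:R != 0 :> R by rewrite pnatr_eq0 -lt0n subn_gt0.
  by rewrite natrB ?(leq_trans le_ik) // natrD => ne0; field; rewrite nat1r.
have shift_ratio i : (i < k)%N ->
    hyp_ratio a0 a1 a2 i * F i * (a0 ^+ (k - i) / (k - i)%:R) =
    hyp_ratio a0 a1 a2 k * (F i * (a0 ^+ (k - i) / (k - i)%:R))
    - F i * a0 ^+ (k.+1 - i) * (k.+1 + i)%:R.
  move=> lt_ik; rewrite (subSn (ltnW lt_ik)) exprS /hyp_ratio a2E.
  have : (k - i)%:R != 0 :> R by rewrite pnatr_eq0 -lt0n subn_gt0.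
  by rewrite natrB ?(ltnW lt_ik) // natrD => ne0; field.
rewrite /logconv mulr_sumr.
rewrite (eq_bigr _ (fun (i : 'I_k.+1) _ => split_sq i (ltnSE (ltn_ord i)))).
rewrite big_split /= (big_ord_recr k) (big_ord_recl k) /=.
rewrite subSnn expr1 expr0n /= !mul0r add0r mulr_sumr.
under [X in _ + X - _]eq_bigr => i _ do rewrite /bump /= subSS Frec.
rewrite (eq_bigr _ (fun (i : 'I_k) _ => shift_ratio i (ltn_ord i))) sumrB.
ring.
Qed.

Lemma Flogcoef_rec k :
  k.+1%:R ^+ 2 * Flogcoef a0 a1 a2 k.+1 - hyp_ratio a0 a1 a2 k * Flogcoef a0 a1 a2 k
  = - (a0 * (k.+1 + k)%:R * Fcoef a0 a1 a2 k).
Proof.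
by rewrite !Flogcoef_logconv -(logconv_rec _ k Fcoef_rec); ring.
Qed.

Lemma Gtcoef_rec k : a1 + k%:R != 0 -> a2 + k%:R != 0 ->
  k.+1%:R ^+ 2 * Gtcoef a0 a1 a2 k.+1 - hyp_ratio a0 a1 a2 k * Gtcoef a0 a1 a2 k
  = a0 * (k.+1 + k)%:R * Fcoef a0 a1 a2 k - 2 * k.+1%:R * Fcoef a0 a1 a2 k.+1.
Proof.
move=> a1k_neq0 a2k_neq0.
have Gt_Fcoef j : Gtcoef a0 a1 a2 j = Fcoef a0 a1 a2 j *
    (\sum_(a <- [:: a1; a2]) \sum_(l < j) ((a + l%:R)^-1 - (1 + l%:R)^-1)).
  by rewrite /Gtcoef /Fcoef; ring.
have k1_neq0 : k.+1%:R != 0 :> R by rewrite pnatr_eq0.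
have F1E : Fcoef a0 a1 a2 k.+1 =
    hyp_ratio a0 a1 a2 k * Fcoef a0 a1 a2 k / k.+1%:R ^+ 2.
  by rewrite -Fcoef_rec; field; rewrite nat1r.
rewrite !Gt_Fcoef !big_cons !big_nil !big_ord_recr /= F1E /hyp_ratio.
move: a2k_neq0; rewrite a2E natrD => a2k_neq0.
by field; rewrite nat1r k1_neq0 a1k_neq0 a2k_neq0.
Qed.

Lemma FlogGt_rec k : a1 + k%:R != 0 -> a2 + k%:R != 0 ->
  k.+1%:R ^+ 2 * (Flogcoef a0 a1 a2 k.+1 + Gtcoef a0 a1 a2 k.+1) =
  hyp_ratio a0 a1 a2 k * (Flogcoef a0 a1 a2 k + Gtcoef a0 a1 a2 k)
  - 2 * k.+1%:R * Fcoef a0 a1 a2 k.+1.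
Proof.
move=> a1k_neq0 a2k_neq0.
have := Gtcoef_rec k a1k_neq0 a2k_neq0; have := Flogcoef_rec k.
rewrite mulrDr => /eqP; rewrite subr_eq => /eqP -> /eqP; rewrite subr_eq => /eqP ->.
ring.
Qed.

End Coefficients.

Theorem mainTheorem7 (R : numClosedFieldType) (n : nat) (a0 a1 a2 : R)
    (Pi0 P2 : ser R) :
  (1 <= n)%N -> a0 != 0 ->
  (forall l : nat, a1 + l%:R != 0) -> (forall l : nat, a2 + l%:R != 0) ->
  (* Pi^0 : the solution holomorphic at 0 with Pi^0(0) = 1 *)
  is_sol n a0 a1 a2 (mkLS Pi0 (ser0 R) (ser0 R)) -> Pi0 0%N 0%N = 1 ->
  (* Pi^2 = Pi^0 log z2 + sum_i Pi^2_i(z1) z2^i, normalized by Pi^2_0(0) = 0 *)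
  is_sol n a0 a1 a2 (mkLS P2 (ser0 R) Pi0) -> P2 0%N 0%N = 0 ->
  a1 + a2 = 1 ->
  forall k : nat,
    P2 k 0%N = - (n%:R / 2) * (Flogcoef a0 a1 a2 k + Gtcoef a0 a1 a2 k).
Proof.
move=> _ _ a1_neq0 a2_neq0 sol0 Pi0_00 sol2 P2_00 a12.
have Pi0E : forall k, Pi0 k 0%N = Fcoef a0 a1 a2 k.
  apply: (recurrence_unique (d := fun _ => 0)); last by rewrite Pi0_00 Fcoef0.
    by move=> k; rewrite (is_sol_rec sol0) /ser0 mulr0.
  by move=> k; rewrite Fcoef_rec addr0.
apply: (recurrence_unique (c := hyp_ratio a0 a1 a2)
          (d := fun k => n%:R * k.+1%:R * Fcoef a0 a1 a2 k.+1)).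
- by move=> k; rewrite (is_sol_rec sol2) Pi0E.
- by move=> k; rewrite mulrCA FlogGt_rec //; field.
- by rewrite P2_00 /Flogcoef /Gtcoef big_ord1 !big_cons big_nil !big_ord0 /=; ring.
Qed.
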